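(* Let $\mathbf{A}$ be an atomic symmetric integral relation algebra that contains a flexible trio. Then $\mathbf{A}$ has the 1-point extension property and $\mathbf{A}$ is representable.
   Context: Relation algebras are in the sense of Tarski; $1'$ identity, $0'$ its complement (diversity element), $;$ relative product; integral: $1'$ is an atom; symmetric: $x^{\smile}=x$ for all $x$; a diversity atom is an atom below $0'$; representable: isomorphic to an algebra of binary relations. Flexible trio: three diversity atoms $a,b,c$ such that $a;a=b;b=c;c=1$, $a;b=a;c=b;c=0'$, and for every atom $x\notin\{1',a,b,c\}$: ($x;a=x;b=0'$) or ($x;a=x;c=0'$) or ($x;b=x;c=0'$). 1-point extension property: for $k<\omega$, $B_k(\mathbf{A})$ is the set of maps $\mu:k\times k\to At(\mathbf{A})$ with $\mu_{i,i}\le1'$, $\mu_{i,j}^{\smile}=\mu_{j,i}$ and $\mu_{i,l};\mu_{l,j}\ge\mu_{i,j}$ for all $i,j,l<k$; $\mu$ satisfies the identity condition if $\mu_{l,m}=1'$ iff $l=m$. $\mathbf{A}$ has the 1-point extension property if whenever $\mu\in B_k(\mathbf{A})$ satisfies the identity condition, $x,y$ are diversity atoms, $i,j<k$, $i\ne j$, and $\mu_{i,j}\le x;y$, there is $\mu'\in B_{k+1}(\mathbf{A})$ satisfying the identity condition with $\mu'_{l,m}=\mu_{l,m}$ for all $l,m<k$, $\mu'_{i,k}=x$ and $\mu'_{k,j}=y$. *)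

Record RAsig := {
  ra_car :> Type;
  ra_join : ra_car -> ra_car -> ra_car;
  ra_compl : ra_car -> ra_car;
  ra_comp : ra_car -> ra_car -> ra_car;
  ra_conv : ra_car -> ra_car;
  ra_id : ra_car
}.

Arguments ra_join {A} : rename.
Arguments ra_compl {A} : rename.
Arguments ra_comp {A} : rename.
Arguments ra_conv {A} : rename.
Arguments ra_id {A} : rename.

Section RA.
Context {A : RAsig}.

Definition ra_meet (x y : A) : A := ra_compl (ra_join (ra_compl x) (ra_compl y)).
Definition ra_zero : A := ra_meet ra_id (ra_compl ra_id).
Definition ra_top : A := ra_compl ra_zero.
Definition ra_div : A := ra_compl ra_id.
Definition ra_le (x y : A) : Prop := ra_join x y = y.

(* Tarski's axioms for relation algebras (Maddux's equational form R1-R10). *)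
Definition is_RA : Prop :=
  (forall x y : A, ra_join x y = ra_join y x) /\
  (forall x y z : A, ra_join x (ra_join y z) = ra_join (ra_join x y) z) /\
  (forall x y : A, ra_join (ra_compl (ra_join (ra_compl x) y))
                           (ra_compl (ra_join (ra_compl x) (ra_compl y))) = x) /\
  (forall x y z : A, ra_comp x (ra_comp y z) = ra_comp (ra_comp x y) z) /\
  (forall x y z : A, ra_comp (ra_join x y) z = ra_join (ra_comp x z) (ra_comp y z)) /\
  (forall x : A, ra_comp x ra_id = x) /\
  (forall x : A, ra_conv (ra_conv x) = x) /\
  (forall x y : A, ra_conv (ra_join x y) = ra_join (ra_conv x) (ra_conv y)) /\
  (forall x y : A, ra_conv (ra_comp x y) = ra_comp (ra_conv y) (ra_conv x)) /\
  (forall x y : A, ra_join (ra_comp (ra_conv x) (ra_compl (ra_comp x y))) (ra_compl y)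
                   = ra_compl y).

Definition is_atom (x : A) : Prop :=
  x <> ra_zero /\ forall y : A, ra_le y x -> y = ra_zero \/ y = x.

Definition is_atomic : Prop :=
  forall x : A, x <> ra_zero -> exists a : A, is_atom a /\ ra_le a x.

Definition is_integral : Prop := is_atom ra_id.

Definition is_symmetric : Prop := forall x : A, ra_conv x = x.

Definition diversity_atom (x : A) : Prop := is_atom x /\ ra_le x ra_div.

Definition flexible_trio (a b c : A) : Prop :=
  diversity_atom a /\ diversity_atom b /\ diversity_atom c /\
  ra_comp a a = ra_top /\ ra_comp b b = ra_top /\ ra_comp c c = ra_top /\
  ra_comp a b = ra_div /\ ra_comp a c = ra_div /\ ra_comp b c = ra_div /\
  (forall x : A, is_atom x -> x <> ra_id -> x <> a -> x <> b -> x <> c ->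
     (ra_comp x a = ra_div /\ ra_comp x b = ra_div) \/
     (ra_comp x a = ra_div /\ ra_comp x c = ra_div) \/
     (ra_comp x b = ra_div /\ ra_comp x c = ra_div)).

(* B_k(A): a map mu : k x k -> At(A); we represent it by a function on
   nat x nat of which only the entries with indices < k matter. *)
Definition in_Bk (k : nat) (mu : nat -> nat -> A) : Prop :=
  (forall i j, i < k -> j < k -> is_atom (mu i j)) /\
  (forall i, i < k -> ra_le (mu i i) ra_id) /\
  (forall i j, i < k -> j < k -> ra_conv (mu i j) = mu j i) /\
  (forall i j l, i < k -> j < k -> l < k ->
     ra_le (mu i j) (ra_comp (mu i l) (mu l j))).

Definition identity_cond (k : nat) (mu : nat -> nat -> A) : Prop :=
  forall l m, l < k -> m < k -> (mu l m = ra_id <-> l = m).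

Definition one_point_extension : Prop :=
  forall (k : nat) (mu : nat -> nat -> A),
    in_Bk k mu -> identity_cond k mu ->
    forall (x y : A) (i j : nat),
      diversity_atom x -> diversity_atom y -> i < k -> j < k -> i <> j ->
      ra_le (mu i j) (ra_comp x y) ->
      exists mu' : nat -> nat -> A,
        in_Bk (S k) mu' /\ identity_cond (S k) mu' /\
        (forall l m, l < k -> m < k -> mu' l m = mu l m) /\
        mu' i k = x /\ mu' k j = y.

(* Representable: isomorphic to a (set) relation algebra, i.e. there is an
   injective homomorphism into the full relation algebra Re(E) of all
   subrelations of some equivalence relation E on a set U. Relations are
   compared extensionally. *)
Definition representable : Prop :=
  exists (U : Type) (E : U -> U -> Prop) (h : A -> U -> U -> Prop),
    (forall u, E u u) /\ (forall u v, E u v -> E v u) /\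
    (forall u v w, E u v -> E v w -> E u w) /\
    (forall x u v, h x u v -> E u v) /\
    (forall x y, (forall u v, h x u v <-> h y u v) -> x = y) /\
    (forall x y u v, h (ra_join x y) u v <-> h x u v \/ h y u v) /\
    (forall x u v, h (ra_compl x) u v <-> E u v /\ ~ h x u v) /\
    (forall x y u v, h (ra_comp x y) u v <-> exists w, h x u w /\ h y w v) /\
    (forall x u v, h (ra_conv x) u v <-> h x v u) /\
    (forall u v, h ra_id u v <-> u = v).

End RA.

(* Every diversity atom z satisfies z ; t = 0' for at least two of the three trio atoms t,
   so any two diversity atoms have a common partner t in the trio.  To add a point k to a
   network with prescribed edges x to i and y to j, label every other new edge by a common
   partner t of x and y: each new triangle is either the prescribed one or has an edge
   labelled t next to an edge labelled by a partner of t, whose product is all of 0'.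

   The representation is built by the same recipe, freely.  Its points are the terms of an
   inductive type whose constructor [spawn u v x y] is a fresh witness for x ; y on the edge
   (u, v).  An edge between a point and one of its parents carries the prescribed atom; every
   other edge gets a trio atom that fits all triangles through a parent of its endpoints, and
   such an atom exists by the same pigeonhole.  All triangles of the resulting atom-labelled
   complete graph are consistent, so x |-> {(p, q) | label p q <= x} is a representation. *)

From Stdlib Require Import Arith Lia Classical_Prop ClassicalEpsilon ProofIrrelevance.

Local Infix "⊕" := ra_join (at level 50, left associativity).
Local Notation "∼ x" := (ra_compl x) (at level 35, right associativity).
Local Infix "⊙" := ra_comp (at level 40, left associativity).
Local Infix "⊑" := ra_le (at level 70).

Section SymmetricIntegralRA.
Context {A : RAsig}.

(** * The Boolean reduct *)

Hypothesis join_comm : forall x y : A, x ⊕ y = y ⊕ x.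
Hypothesis join_assoc : forall x y z : A, x ⊕ (y ⊕ z) = x ⊕ y ⊕ z.
Hypothesis huntington : forall x y : A, ∼(∼x ⊕ y) ⊕ ∼(∼x ⊕ ∼y) = x.

Lemma join_swap_outer (x y z w : A) : x ⊕ y ⊕ (z ⊕ w) = w ⊕ y ⊕ (z ⊕ x).
Proof.
  rewrite (join_comm z w), (join_comm z x), !join_assoc.
  rewrite (join_comm x y), (join_comm w y), <- (join_assoc y x w), (join_comm x w).
  now rewrite join_assoc.
Qed.

Lemma compl_involutive (x : A) : ∼∼x = x.
Proof.
  set (x1 := ∼x). set (x2 := ∼x1). set (x3 := ∼x2). set (x4 := ∼x3).
  set (a := ∼(x4 ⊕ x2)). set (b := ∼(x4 ⊕ x3)).
  set (c := ∼(x3 ⊕ x2)). set (d := ∼(x3 ⊕ x3)).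
  assert (eAB : a ⊕ b = x3) by apply huntington.
  assert (eCD : c ⊕ d = x2) by apply huntington.
  assert (eDB : d ⊕ b = x2).
  { rewrite <- (huntington x2 x3). unfold d, b. now rewrite (join_comm x4 x3). }
  assert (eCA : c ⊕ a = x1).
  { rewrite <- (huntington x1 x3). unfold c, a. now rewrite (join_comm x3 x2), (join_comm x4 x2). }
  transitivity (∼(x3 ⊕ x1) ⊕ ∼(a ⊕ b ⊕ (c ⊕ d))).
  { rewrite eAB, eCD. symmetry. apply huntington. }
  transitivity (∼(d ⊕ b ⊕ (c ⊕ a)) ⊕ ∼(x1 ⊕ x3)).
  2:{ rewrite eDB, eCA, <- (huntington x x2), (join_comm x2 x1). reflexivity. }
  rewrite (join_comm (∼(x3 ⊕ x1))), (join_comm x3 x1), join_swap_outer.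
  reflexivity.
Qed.

Lemma join_compl_indep (x y : A) : x ⊕ ∼x = y ⊕ ∼y.
Proof.
  pose proof (huntington (∼x) y) as ex. rewrite compl_involutive in ex.
  pose proof (huntington (∼y) x) as ey. rewrite compl_involutive in ey.
  transitivity (∼(∼x ⊕ y) ⊕ ∼(∼x ⊕ ∼y) ⊕ (∼(x ⊕ y) ⊕ ∼(x ⊕ ∼y))).
  { now rewrite huntington, ex. }
  transitivity (∼(∼y ⊕ x) ⊕ ∼(∼y ⊕ ∼x) ⊕ (∼(y ⊕ x) ⊕ ∼(y ⊕ ∼x))).
  2:{ now rewrite huntington, ey. }
  rewrite (join_comm (∼y) x), (join_comm (∼y) (∼x)), (join_comm y x), (join_comm y (∼x)).
  apply join_swap_outer.
Qed.

Lemma join_compl (x : A) : x ⊕ ∼x = ra_top.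
Proof.
  unfold ra_top, ra_zero, ra_meet. rewrite !compl_involutive, (join_comm (∼ra_id)).
  apply join_compl_indep.
Qed.

Lemma zero_compl_top : @ra_zero A = ∼ra_top.
Proof. unfold ra_top. now rewrite compl_involutive. Qed.

Lemma huntington_self (x : A) : ∼ra_top ⊕ ∼(∼x ⊕ ∼x) = x.
Proof. rewrite <- (join_compl x) at 1. rewrite (join_comm x). apply huntington. Qed.

Lemma join_zero (x : A) : x ⊕ ra_zero = x.
Proof.
  assert (zz : ∼ra_top ⊕ ∼ra_top = ∼ra_top :> A).
  { assert (e1 : ∼ra_top ⊕ ∼(∼ra_top ⊕ ∼ra_top) = ra_top :> A) by apply huntington_self.
    assert (e2 : ∼(∼ra_top ⊕ ∼ra_top) ⊕ ra_top = ra_top ⊕ ra_top :> A).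
    { rewrite <- e1 at 5. now rewrite join_assoc, join_compl, join_comm. }
    pose proof (huntington (∼ra_top ⊕ ∼ra_top) ra_top) as e3.
    rewrite e2, (join_comm _ (∼ra_top)), e1 in e3.
    pose proof (huntington_self (∼ra_top)) as e4. rewrite !compl_involutive in e4.
    now rewrite <- e3, join_comm. }
  rewrite zero_compl_top, <- (huntington_self x) at 1.
  now rewrite <- join_assoc, (join_comm _ (∼ra_top)), join_assoc, zz, huntington_self.
Qed.

Lemma join_idem (x : A) : x ⊕ x = x.
Proof.
  pose proof (huntington_self (∼x)) as e.
  rewrite !compl_involutive, join_comm, <- zero_compl_top, join_zero in e.
  now rewrite <- (compl_involutive (x ⊕ x)), e, compl_involutive.
Qed.

Lemma join_top (x : A) : x ⊕ ra_top = ra_top.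
Proof. now rewrite <- (join_compl x), join_assoc, join_idem. Qed.

Lemma le_refl (x : A) : x ⊑ x.
Proof. apply join_idem. Qed.

Lemma le_trans (x y z : A) : x ⊑ y -> y ⊑ z -> x ⊑ z.
Proof. unfold ra_le. intros hxy hyz. now rewrite <- hyz, join_assoc, hxy. Qed.

Lemma le_antisym (x y : A) : x ⊑ y -> y ⊑ x -> x = y.
Proof. unfold ra_le. intros hxy hyx. now rewrite <- hxy, <- hyx at 1. Qed.

Lemma le_join_l (x y : A) : x ⊑ x ⊕ y.
Proof. unfold ra_le. now rewrite join_assoc, join_idem. Qed.

Lemma le_join_r (x y : A) : y ⊑ x ⊕ y.
Proof. rewrite join_comm. apply le_join_l. Qed.

Lemma join_lub (x y z : A) : x ⊑ z -> y ⊑ z -> x ⊕ y ⊑ z.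
Proof. unfold ra_le. intros hxz hyz. now rewrite <- join_assoc, hyz, hxz. Qed.

Lemma le_compl (x y : A) : x ⊑ y -> ∼y ⊑ ∼x.
Proof.
  unfold ra_le. intro hxy.
  pose proof (huntington (∼x) y) as e. rewrite compl_involutive, hxy in e.
  now rewrite <- e, join_assoc, join_idem.
Qed.

Lemma le_compl_swap (x y : A) : x ⊑ ∼y -> y ⊑ ∼x.
Proof. intro h. apply le_compl in h. now rewrite compl_involutive in h. Qed.

Lemma meet_comm (x y : A) : ra_meet x y = ra_meet y x.
Proof. unfold ra_meet. now rewrite join_comm. Qed.

Lemma meet_le_l (x y : A) : ra_meet x y ⊑ x.
Proof. unfold ra_meet. rewrite <- (huntington x y) at 2. apply le_join_r. Qed.

Lemma meet_le_r (x y : A) : ra_meet x y ⊑ y.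
Proof. rewrite meet_comm. apply meet_le_l. Qed.

Lemma meet_glb (x y z : A) : z ⊑ x -> z ⊑ y -> z ⊑ ra_meet x y.
Proof.
  intros hx hy. apply le_compl_swap.
  exact (join_lub _ _ _ (le_compl _ _ hx) (le_compl _ _ hy)).
Qed.

Lemma le_zero (x : A) : ra_zero ⊑ x.
Proof. unfold ra_le. rewrite join_comm. apply join_zero. Qed.

Lemma le_top (x : A) : x ⊑ ra_top.
Proof. apply join_top. Qed.

Lemma meet_compl (x : A) : ra_meet x (∼x) = ra_zero.
Proof. unfold ra_meet. now rewrite compl_involutive, join_comm, join_compl, zero_compl_top. Qed.

Lemma join_meet_compl (x y : A) : ra_meet x (∼y) ⊕ ra_meet x y = x.
Proof. unfold ra_meet. rewrite compl_involutive. apply huntington. Qed.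

Lemma le_compl_of_meet_zero (x y : A) : ra_meet x y = ra_zero -> x ⊑ ∼y.
Proof.
  intro h. rewrite <- (join_meet_compl x y), h, join_zero. apply meet_le_r.
Qed.

Lemma le_and_le_compl_zero (x y : A) : x ⊑ y -> x ⊑ ∼y -> x = ra_zero.
Proof.
  intros h1 h2. apply le_antisym; [|apply le_zero].
  rewrite <- (meet_compl y). now apply meet_glb.
Qed.

Lemma atom_le_or_le_compl (p x : A) : is_atom p -> p ⊑ x \/ p ⊑ ∼x.
Proof.
  intros [_ hp]. destruct (hp (ra_meet p x) (meet_le_l _ _)) as [h|h].
  - right. now apply le_compl_of_meet_zero.
  - left. rewrite <- h. apply meet_le_r.
Qed.

Lemma atom_le_compl (p x : A) : is_atom p -> ~ p ⊑ x -> p ⊑ ∼x.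
Proof. intros hp h. destruct (atom_le_or_le_compl p x hp); tauto. Qed.

Lemma atom_not_le (p x : A) : is_atom p -> p ⊑ ∼x -> ~ p ⊑ x.
Proof. intros [hp _] h1 h2. apply hp. now apply (le_and_le_compl_zero p x). Qed.

Lemma atom_le_join (p x y : A) : is_atom p -> p ⊑ x ⊕ y -> p ⊑ x \/ p ⊑ y.
Proof.
  intros hp h.
  destruct (atom_le_or_le_compl p x hp) as [hx|hx]; [auto|].
  destruct (atom_le_or_le_compl p y hp) as [hy|hy]; [auto|].
  exfalso. apply (atom_not_le p (x ⊕ y) hp); [|exact h].
  pose proof (meet_glb _ _ _ hx hy) as hm. unfold ra_meet in hm.
  now rewrite !compl_involutive in hm.
Qed.

Lemma atom_le_atom (p q : A) : is_atom p -> is_atom q -> p ⊑ q -> p = q.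
Proof. intros [hp _] [_ hq] h. destruct (hq p h); tauto. Qed.

Hypothesis atomic : is_atomic (A := A).

Lemma atom_separates (x y : A) : x <> y ->
  exists p, is_atom p /\ ((p ⊑ x /\ ~ p ⊑ y) \/ (p ⊑ y /\ ~ p ⊑ x)).
Proof.
  intro hxy.
  assert (below : forall u v : A, ~ u ⊑ v -> exists p, is_atom p /\ p ⊑ u /\ ~ p ⊑ v).
  { intros u v huv.
    assert (hm : ra_meet u (∼v) <> ra_zero).
    { intro e. apply huv. rewrite <- (join_meet_compl u v), e, join_comm, join_zero.
      apply meet_le_r. }
    destruct (atomic _ hm) as [p [hp hle]]. exists p. split; [exact hp|split].
    - exact (le_trans _ _ _ hle (meet_le_l _ _)).
    - apply atom_not_le; [exact hp|]. exact (le_trans _ _ _ hle (meet_le_r _ _)). }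
  destruct (classic (x ⊑ y)) as [h1|h1].
  - destruct (classic (y ⊑ x)) as [h2|h2].
    + exfalso. apply hxy. now apply le_antisym.
    + destruct (below _ _ h2) as [p [? [? ?]]]. exists p. auto.
  - destruct (below _ _ h1) as [p [? [? ?]]]. exists p. auto.
Qed.

(** * Symmetric integral relation algebras *)

Hypothesis comp_join_distr : forall x y z : A, (x ⊕ y) ⊙ z = x ⊙ z ⊕ y ⊙ z.
Hypothesis comp_id_r : forall x : A, x ⊙ ra_id = x.
Hypothesis conv_comp : forall x y : A, ra_conv (x ⊙ y) = ra_conv y ⊙ ra_conv x.
Hypothesis cycle_law : forall x y : A, ra_conv x ⊙ ∼(x ⊙ y) ⊕ ∼y = ∼y.
Hypothesis symmetric : is_symmetric (A := A).
Hypothesis integral : is_integral (A := A).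

Lemma comp_comm (x y : A) : x ⊙ y = y ⊙ x.
Proof. now rewrite <- (symmetric (x ⊙ y)), conv_comp, !symmetric. Qed.

Lemma comp_id_l (x : A) : ra_id ⊙ x = x.
Proof. rewrite comp_comm. apply comp_id_r. Qed.

Lemma comp_mono_l (x y z : A) : x ⊑ y -> x ⊙ z ⊑ y ⊙ z.
Proof. unfold ra_le. intro h. now rewrite <- comp_join_distr, h. Qed.

Lemma comp_mono (x y x' y' : A) : x ⊑ x' -> y ⊑ y' -> x ⊙ y ⊑ x' ⊙ y'.
Proof.
  intros hx hy. apply le_trans with (x' ⊙ y); [now apply comp_mono_l|].
  rewrite !(comp_comm x'). now apply comp_mono_l.
Qed.

Lemma le_compl_comp_swap (u v w : A) : u ⊑ ∼(v ⊙ w) -> w ⊑ ∼(v ⊙ u).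
Proof.
  intro h. apply le_compl_swap, le_trans with (v ⊙ ∼(v ⊙ w)).
  - now apply comp_mono; [apply le_refl|].
  - unfold ra_le. rewrite <- (symmetric v) at 1. apply cycle_law.
Qed.

Lemma atom_cycle (p q r : A) : is_atom p -> is_atom q -> p ⊑ q ⊙ r -> q ⊑ p ⊙ r.
Proof.
  intros hp hq h. destruct (atom_le_or_le_compl q (p ⊙ r) hq) as [hqr|hqr]; [exact hqr|].
  exfalso. apply le_compl_comp_swap in hqr. rewrite comp_comm in hqr.
  apply le_compl_comp_swap in hqr. exact (atom_not_le p _ hp hqr h).
Qed.

Lemma atom_le_comp_atom_l (z x y : A) : is_atom z -> z ⊑ x ⊙ y ->
  exists x', is_atom x' /\ x' ⊑ x /\ z ⊑ x' ⊙ y.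
Proof.
  intros hz h.
  assert (hm : ra_meet x (y ⊙ z) <> ra_zero).
  { intro e. apply le_compl_of_meet_zero, le_compl_comp_swap in e.
    rewrite comp_comm in e. exact (atom_not_le z _ hz e h). }
  destruct (atomic _ hm) as [x' [hx' hle]]. exists x'. split; [exact hx'|split].
  - exact (le_trans _ _ _ hle (meet_le_l _ _)).
  - apply atom_cycle; [exact hx'|exact hz|]. rewrite comp_comm.
    exact (le_trans _ _ _ hle (meet_le_r _ _)).
Qed.

Lemma atom_le_comp_atoms (z x y : A) : is_atom z -> z ⊑ x ⊙ y ->
  exists x' y', is_atom x' /\ is_atom y' /\ x' ⊑ x /\ y' ⊑ y /\ z ⊑ x' ⊙ y'.
Proof.
  intros hz h.
  destruct (atom_le_comp_atom_l z x y hz h) as [x' [hx' [hxx' h']]].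
  rewrite comp_comm in h'.
  destruct (atom_le_comp_atom_l z y x' hz h') as [y' [hy' [hyy' h'']]].
  exists x', y'. rewrite comp_comm in h''. auto.
Qed.

Lemma id_le_comp_self (d : A) : d <> ra_zero -> ra_id ⊑ d ⊙ d.
Proof.
  intro hd. destruct (atom_le_or_le_compl ra_id (d ⊙ d) integral) as [h|h]; [exact h|].
  exfalso. apply le_compl_comp_swap in h. rewrite comp_id_r in h.
  exact (hd (le_and_le_compl_zero d d (le_refl d) h)).
Qed.

Lemma id_le_comp_eq (x y : A) : is_atom x -> is_atom y -> ra_id ⊑ x ⊙ y -> x = y.
Proof.
  intros hx hy h. apply atom_cycle in h; [|exact integral|exact hx].
  rewrite comp_id_l in h. now apply atom_le_atom.
Qed.

Lemma atom_diversity (p : A) : is_atom p -> p <> ra_id -> diversity_atom p.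
Proof.
  intros hp hne. split; [exact hp|]. apply atom_le_compl; [exact hp|].
  intro h. exact (hne (atom_le_atom _ _ hp integral h)).
Qed.

Lemma diversity_not_le_id (d : A) : diversity_atom d -> ~ d ⊑ ra_id.
Proof. intros [hd h]. now apply atom_not_le. Qed.

Lemma diversity_ne_id (d : A) : diversity_atom d -> d <> ra_id.
Proof. intros hd e. apply (diversity_not_le_id d hd). rewrite e. apply le_refl. Qed.

Lemma atom_id_or_diversity (p : A) : is_atom p -> p = ra_id \/ diversity_atom p.
Proof.
  intro hp. destruct (classic (p = ra_id)) as [e|hne]; [now left|].
  right. now apply atom_diversity.
Qed.

Lemma triangle_of_distinct {X : Type} (P : X -> Prop) (g : X -> X -> A) :
  (forall l m, P l -> P m -> g l m = g m l) ->
  (forall l, P l -> g l l = ra_id) ->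
  (forall l m, P l -> P m -> l <> m -> is_atom (g l m)) ->
  (forall l m p, P l -> P m -> P p -> l <> m -> l <> p -> m <> p ->
     g l m ⊑ g l p ⊙ g p m) ->
  forall l m p, P l -> P m -> P p -> g l m ⊑ g l p ⊙ g p m.
Proof.
  intros gsym gdiag gatom gtri l m p hl hm hp.
  destruct (classic (l = p)) as [<-|hlp]; [rewrite gdiag, comp_id_l by exact hl; apply le_refl|].
  destruct (classic (m = p)) as [<-|hmp]; [rewrite gdiag, comp_id_r by exact hm; apply le_refl|].
  destruct (classic (l = m)) as [<-|hlm]; [|now apply gtri].
  rewrite gdiag, (gsym p l) by assumption.
  apply id_le_comp_self. exact (proj1 (gatom l p hl hp hlp)).
Qed.

(** * The 1-point extension property *)

Definition extend (k : nat) (mu : nat -> nat -> A) (f : nat -> A) (l m : nat) : A :=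
  if lt_dec l k then (if lt_dec m k then mu l m else f l)
  else if lt_dec m k then f m else ra_id.

Section Extend.
Variables (k : nat) (mu : nat -> nat -> A) (f : nat -> A).

Lemma extend_old (l m : nat) : l < k -> m < k -> extend k mu f l m = mu l m.
Proof. unfold extend. intros hl hm. now destruct (lt_dec l k), (lt_dec m k). Qed.

Lemma extend_new_r (l : nat) : l < k -> extend k mu f l k = f l.
Proof. unfold extend. intro hl. destruct (lt_dec l k), (lt_dec k k); auto; lia. Qed.

Lemma extend_new_l (m : nat) : m < k -> extend k mu f k m = f m.
Proof. unfold extend. intro hm. destruct (lt_dec k k), (lt_dec m k); auto; lia. Qed.

Lemma extend_new_new : extend k mu f k k = ra_id.
Proof. unfold extend. destruct (lt_dec k k); auto; lia. Qed.

Lemma lt_succ_cases (l : nat) : l < S k -> l < k \/ l = k.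
Proof. lia. Qed.

Hypothesis mu_Bk : in_Bk k mu.
Hypothesis mu_id : identity_cond k mu.
Hypothesis f_div : forall l, l < k -> diversity_atom (f l).
Hypothesis f_fits : forall l m, l < k -> m < k -> l <> m -> mu l m ⊑ f l ⊙ f m.

Lemma extend_diag (l : nat) : l < S k -> extend k mu f l l = ra_id.
Proof.
  intro hl. destruct (lt_succ_cases l hl) as [hl'| ->]; [|apply extend_new_new].
  rewrite extend_old by exact hl'. now apply mu_id.
Qed.

Lemma extend_sym (l m : nat) : l < S k -> m < S k -> extend k mu f l m = extend k mu f m l.
Proof.
  intros hl hm. destruct mu_Bk as [_ [_ [mu_conv _]]].
  destruct (lt_succ_cases l hl) as [hl'| ->], (lt_succ_cases m hm) as [hm'| ->];
    rewrite ?extend_new_l, ?extend_new_r, ?extend_old by assumption; try reflexivity.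
  now rewrite <- mu_conv, symmetric.
Qed.

Lemma extend_atom (l m : nat) : l < S k -> m < S k -> is_atom (extend k mu f l m).
Proof.
  intros hl hm. destruct mu_Bk as [mu_atom _].
  destruct (lt_succ_cases l hl) as [hl'| ->], (lt_succ_cases m hm) as [hm'| ->];
    rewrite ?extend_new_new, ?extend_new_l, ?extend_new_r, ?extend_old by assumption;
    auto; now apply f_div.
Qed.

Lemma extend_identity_cond : identity_cond (S k) (extend k mu f).
Proof.
  intros l m hl hm. split; [|intros <-; now apply extend_diag].
  destruct (lt_succ_cases l hl) as [hl'| ->], (lt_succ_cases m hm) as [hm'| ->];
    rewrite ?extend_new_l, ?extend_new_r, ?extend_old by assumption; try reflexivity.
  - now apply mu_id.
  - intro e. exfalso. exact (diversity_ne_id _ (f_div l hl') e).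
  - intro e. exfalso. exact (diversity_ne_id _ (f_div m hm') e).
Qed.

Lemma extend_triangle_distinct (l m p : nat) : l < S k -> m < S k -> p < S k ->
  l <> m -> l <> p -> m <> p ->
  extend k mu f l m ⊑ extend k mu f l p ⊙ extend k mu f p m.
Proof.
  intros hl hm hp hlm hlp hmp. destruct mu_Bk as [mu_atom [_ [_ mu_tri]]].
  destruct (lt_succ_cases l hl) as [hl'| ->], (lt_succ_cases m hm) as [hm'| ->],
    (lt_succ_cases p hp) as [hp'| ->];
    try lia; rewrite ?extend_new_l, ?extend_new_r, ?extend_old by assumption.
  - now apply mu_tri.
  - now apply f_fits.
  - apply atom_cycle; [now apply mu_atom|apply f_div; exact hl'|]. now apply f_fits.
  - rewrite comp_comm. apply atom_cycle; [now apply mu_atom|apply f_div; exact hm'|].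
    rewrite comp_comm. now apply f_fits.
Qed.

Lemma extend_in_Bk : in_Bk (S k) (extend k mu f).
Proof.
  split; [exact extend_atom|split; [|split]].
  - intros l hl. rewrite extend_diag by exact hl. apply le_refl.
  - intros l m hl hm. rewrite symmetric. now apply extend_sym.
  - apply (triangle_of_distinct (fun l => l < S k) (extend k mu f)).
    + exact extend_sym.
    + exact extend_diag.
    + intros. now apply extend_atom.
    + exact extend_triangle_distinct.
Qed.

End Extend.

Section FlexibleTrio.
Variables a b c : A.
Hypothesis flexible : flexible_trio a b c.

Definition in_trio (t : A) : Prop := t = a \/ t = b \/ t = c.

Lemma trio_diversity (t : A) : in_trio t -> diversity_atom t.
Proof. destruct flexible as [ha [hb [hc _]]]. now intros [->|[->| ->]]. Qed.

Lemma trio_atom (t : A) : in_trio t -> is_atom t.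
Proof. intro ht. exact (proj1 (trio_diversity t ht)). Qed.

Lemma div_le_comp_trio (t1 t2 : A) : in_trio t1 -> in_trio t2 -> ra_div ⊑ t1 ⊙ t2.
Proof.
  destruct flexible as [_ [_ [_ [haa [hbb [hcc [hab [hac [hbc _]]]]]]]]].
  intros [->|[->| ->]] [->|[->| ->]];
    rewrite ?haa, ?hbb, ?hcc, ?hab, ?hac, ?hbc, ?(comp_comm b a), ?(comp_comm c a),
      ?(comp_comm c b), ?hab, ?hac, ?hbc; solve [apply le_top | apply le_refl].
Qed.

Lemma diversity_le_comp_trio (x t1 t2 : A) :
  diversity_atom x -> in_trio t1 -> in_trio t2 -> x ⊑ t1 ⊙ t2.
Proof. intros [_ hx] h1 h2. exact (le_trans _ _ _ hx (div_le_comp_trio t1 t2 h1 h2)). Qed.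

Lemma two_trio_partners (z : A) : diversity_atom z ->
  (ra_div ⊑ z ⊙ a /\ ra_div ⊑ z ⊙ b) \/ (ra_div ⊑ z ⊙ a /\ ra_div ⊑ z ⊙ c) \/
  (ra_div ⊑ z ⊙ b /\ ra_div ⊑ z ⊙ c).
Proof.
  intro hz.
  assert (ta : in_trio a) by now left.
  assert (tb : in_trio b) by now right; left.
  assert (tc : in_trio c) by now right; right.
  destruct (classic (in_trio z)) as [hzt|hzt].
  { left. split; now apply div_le_comp_trio. }
  destruct flexible as [_ [_ [_ [_ [_ [_ [_ [_ [_ hrest]]]]]]]]].
  assert (hne : z <> a /\ z <> b /\ z <> c) by (unfold in_trio in hzt; tauto).
  destruct hne as [na [nb nc]].
  destruct (hrest z (proj1 hz) (diversity_ne_id z hz) na nb nc) as [[-> ->]|[[-> ->]|[-> ->]]];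
    [left|right; left|right; right]; split; apply le_refl.
Qed.

Lemma common_trio_partner (z1 z2 : A) : diversity_atom z1 -> diversity_atom z2 ->
  exists t, in_trio t /\ ra_div ⊑ z1 ⊙ t /\ ra_div ⊑ z2 ⊙ t.
Proof.
  intros h1 h2.
  assert (ta : in_trio a) by now left.
  assert (tb : in_trio b) by now right; left.
  assert (tc : in_trio c) by now right; right.
  destruct (two_trio_partners z1 h1) as [[? ?]|[[? ?]|[? ?]]];
  destruct (two_trio_partners z2 h2) as [[? ?]|[[? ?]|[? ?]]];
  first [exists a; now auto | exists b; now auto | exists c; now auto].
Qed.

Section Column.
Variables (i j : nat) (x y t : A).

Definition column (m : nat) : A :=
  if Nat.eq_dec m i then x else if Nat.eq_dec m j then y else t.

Lemma column_i : column i = x.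
Proof. unfold column. now destruct (Nat.eq_dec i i). Qed.

Lemma column_j : i <> j -> column j = y.
Proof. unfold column. intro hij. destruct (Nat.eq_dec j i), (Nat.eq_dec j j); congruence. Qed.

Lemma column_other (m : nat) : m <> i -> m <> j -> column m = t.
Proof. unfold column. intros hmi hmj. destruct (Nat.eq_dec m i), (Nat.eq_dec m j); congruence. Qed.

Hypothesis ht : in_trio t.
Hypothesis hxt : ra_div ⊑ x ⊙ t.
Hypothesis hyt : ra_div ⊑ y ⊙ t.

Lemma column_diversity (m : nat) : diversity_atom x -> diversity_atom y -> diversity_atom (column m).
Proof.
  intros hx hy. unfold column.
  destruct (Nat.eq_dec m i), (Nat.eq_dec m j); auto. now apply trio_diversity.
Qed.

Lemma div_le_column_comp_t (m : nat) : ra_div ⊑ column m ⊙ t.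
Proof.
  unfold column. destruct (Nat.eq_dec m i), (Nat.eq_dec m j); auto.
  now apply div_le_comp_trio.
Qed.

Lemma column_fits (k : nat) (mu : nat -> nat -> A) :
  in_Bk k mu -> identity_cond k mu -> i <> j -> mu i j ⊑ x ⊙ y ->
  forall l m, l < k -> m < k -> l <> m -> mu l m ⊑ column l ⊙ column m.
Proof.
  intros [mu_atom [_ [mu_conv _]]] hid hij hle l m hl hm hlm.
  assert (hdiv : mu l m ⊑ ra_div).
  { apply (atom_diversity (mu l m) (mu_atom l m hl hm)). intro e. now apply hlm, hid. }
  destruct (classic (m = i \/ m = j)) as [hm_ij|hm_ij].
  2:{ rewrite (column_other m) by tauto. exact (le_trans _ _ _ hdiv (div_le_column_comp_t l)). }
  destruct (classic (l = i \/ l = j)) as [hl_ij|hl_ij].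
  2:{ rewrite (column_other l), comp_comm by tauto.
      exact (le_trans _ _ _ hdiv (div_le_column_comp_t m)). }
  destruct hl_ij as [-> | ->], hm_ij as [-> | ->]; try (exfalso; now apply hlm).
  - now rewrite column_i, column_j.
  - rewrite column_i, column_j, <- mu_conv, symmetric, comp_comm by assumption. exact hle.
Qed.

End Column.

Theorem one_point_extension_of_flexible_trio : one_point_extension (A := A).
Proof.
  intros k mu hmu hid x y i j hx hy hi hj hij hle.
  destruct (common_trio_partner x y hx hy) as [t [ht [hxt hyt]]].
  assert (f_div : forall l, l < k -> diversity_atom (column i j x y t l))
    by (intros; now apply column_diversity).
  assert (f_fits := column_fits i j x y t ht hxt hyt k mu hmu hid hij hle).
  exists (extend k mu (column i j x y t)).
  split; [now apply extend_in_Bk|split; [now apply extend_identity_cond|split; [|split]]].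
  - intros l m hl hm. now apply extend_old.
  - rewrite extend_new_r by exact hi. apply column_i.
  - rewrite extend_new_l by exact hj. now apply column_j.
Qed.

(** * The representation *)

Inductive point : Type :=
  | origin : point
  | spawn : point -> point -> A -> A -> point.

Fixpoint point_size (p : point) : nat :=
  match p with origin => 0 | spawn u v _ _ => S (point_size u + point_size v) end.

Definition dec (P : Prop) : {P} + {~ P} := excluded_middle_informative P.

Definition parent_label (p q : point) : option A :=
  match p with
  | origin => None
  | spawn u v x y => if dec (q = u) then Some x else if dec (q = v) then Some y else None
  end.

Definition edge_label (p q : point) : option A :=
  match parent_label p q with Some z => Some z | None => parent_label q p end.

Definition parent_of (r p : point) : Prop :=
  exists u v x y, p = spawn u v x y /\ (r = u \/ r = v).

Definition fits (p q : point) (t : A) : Prop :=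
  forall r z1 z2, parent_of r p \/ parent_of r q ->
    edge_label p r = Some z1 -> edge_label r q = Some z2 -> t ⊑ z1 ⊙ z2.

Definition trio_label (p q : point) : A :=
  if dec (fits p q a) then a else if dec (fits p q b) then b else c.

Definition label (p q : point) : A :=
  if dec (p = q) then ra_id
  else match edge_label p q with Some z => z | None => trio_label p q end.

Fixpoint valid (p : point) : Prop :=
  match p with
  | origin => True
  | spawn u v x y =>
      valid u /\ valid v /\ diversity_atom x /\ diversity_atom y /\ label u v ⊑ x ⊙ y
  end.

Lemma parent_of_size (r p : point) : parent_of r p -> point_size r < point_size p.
Proof. intros [u [v [x [y [-> [-> | ->]]]]]]; simpl; lia. Qed.

Lemma parent_label_parent (p q : point) (z : A) : parent_label p q = Some z -> parent_of q p.
Proof.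
  destruct p as [|u v x y]; simpl; [discriminate|].
  destruct (dec (q = u)); [intros _; exists u, v, x, y; auto|].
  destruct (dec (q = v)); [intros _; exists u, v, x, y; auto|discriminate].
Qed.

Lemma parent_label_diversity (p q : point) (z : A) :
  valid p -> parent_label p q = Some z -> diversity_atom z.
Proof.
  destruct p as [|u v x y]; simpl; [discriminate|]. intros [_ [_ [hx [hy _]]]].
  destruct (dec (q = u)); [now intros [= <-]|].
  destruct (dec (q = v)); [now intros [= <-]|discriminate].
Qed.

Lemma edge_label_parent (p q : point) (z : A) :
  edge_label p q = Some z -> parent_of q p \/ parent_of p q.
Proof.
  unfold edge_label. destruct (parent_label p q) eqn:e; intro h.
  - left. exact (parent_label_parent _ _ _ e).
  - right. exact (parent_label_parent _ _ _ h).
Qed.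

Lemma edge_label_parent_of_le (p q : point) (z : A) :
  edge_label p q = Some z -> point_size q <= point_size p -> parent_of q p.
Proof.
  intros h hs. destruct (edge_label_parent p q z h) as [hq|hp]; [exact hq|].
  apply parent_of_size in hp. lia.
Qed.

Lemma edge_label_diversity (p q : point) (z : A) :
  valid p -> valid q -> edge_label p q = Some z -> diversity_atom z.
Proof.
  unfold edge_label. intros hp hq. destruct (parent_label p q) eqn:e.
  - intros [= <-]. exact (parent_label_diversity _ _ _ hp e).
  - exact (parent_label_diversity _ _ _ hq).
Qed.

Lemma edge_label_sym (p q : point) : edge_label p q = edge_label q p.
Proof.
  unfold edge_label.
  destruct (parent_label p q) eqn:e1, (parent_label q p) eqn:e2; auto.
  apply parent_label_parent, parent_of_size in e1.
  apply parent_label_parent, parent_of_size in e2. lia.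
Qed.

Lemma fits_sym (p q : point) (t : A) : fits p q t -> fits q p t.
Proof.
  intros h r z1 z2 hr h1 h2. rewrite comp_comm.
  apply (h r z2 z1); [tauto| |]; now rewrite edge_label_sym.
Qed.

Lemma trio_label_sym (p q : point) : trio_label p q = trio_label q p.
Proof.
  unfold trio_label.
  destruct (dec (fits p q a)) as [h1|h1], (dec (fits q p a)) as [h2|h2]; try reflexivity.
  - exfalso. exact (h2 (fits_sym _ _ _ h1)).
  - exfalso. exact (h1 (fits_sym _ _ _ h2)).
  - destruct (dec (fits p q b)) as [h3|h3], (dec (fits q p b)) as [h4|h4]; try reflexivity.
    + exfalso. exact (h4 (fits_sym _ _ _ h3)).
    + exfalso. exact (h3 (fits_sym _ _ _ h4)).
Qed.

Lemma label_sym (p q : point) : label p q = label q p.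
Proof.
  unfold label. destruct (dec (p = q)), (dec (q = p)); try congruence.
  now rewrite edge_label_sym, trio_label_sym.
Qed.

Lemma label_refl (p : point) : label p p = ra_id.
Proof. unfold label. now destruct (dec (p = p)). Qed.

Lemma label_edge (p q : point) (z : A) : p <> q -> edge_label p q = Some z -> label p q = z.
Proof. intros hne h. unfold label. destruct (dec (p = q)); [contradiction|]. now rewrite h. Qed.

Lemma label_no_edge (p q : point) : p <> q -> edge_label p q = None -> label p q = trio_label p q.
Proof. intros hne h. unfold label. destruct (dec (p = q)); [contradiction|]. now rewrite h. Qed.

Lemma spawn_ne_l (u v : point) (x y : A) : spawn u v x y <> u.
Proof. intro e. apply (f_equal point_size) in e. simpl in e. lia. Qed.

Lemma spawn_ne_r (u v : point) (x y : A) : spawn u v x y <> v.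
Proof. intro e. apply (f_equal point_size) in e. simpl in e. lia. Qed.

Lemma label_spawn_l (u v : point) (x y : A) : label (spawn u v x y) u = x.
Proof.
  apply label_edge; [apply spawn_ne_l|]. unfold edge_label. simpl.
  now destruct (dec (u = u)).
Qed.

Lemma label_spawn_r (u v : point) (x y : A) : v <> u -> label (spawn u v x y) v = y.
Proof.
  intro hvu. apply label_edge; [apply spawn_ne_r|]. unfold edge_label. simpl.
  now destruct (dec (v = u)), (dec (v = v)).
Qed.

Lemma common_trio_partner_opt (o1 o2 : option A) :
  (forall z, o1 = Some z -> diversity_atom z) -> (forall z, o2 = Some z -> diversity_atom z) ->
  exists t, in_trio t /\ (forall z, o1 = Some z -> ra_div ⊑ z ⊙ t) /\
    (forall z, o2 = Some z -> ra_div ⊑ z ⊙ t).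
Proof.
  intros h1 h2.
  assert (hd : forall o, (forall z, o = Some z -> diversity_atom z) ->
    diversity_atom (match o with Some z => z | None => a end)).
  { intros [z|] ho; [now apply ho|]. apply trio_diversity. now left. }
  destruct (common_trio_partner _ _ (hd o1 h1) (hd o2 h2)) as [t [ht [t1 t2]]].
  exists t. split; [exact ht|]. split; intros z ->; assumption.
Qed.

Lemma partner_le_comp (z t w : A) :
  ra_div ⊑ z ⊙ t -> is_atom t -> diversity_atom w -> t ⊑ w ⊙ z.
Proof.
  intros hzt ht [hw hwd]. apply atom_cycle; [exact hw|exact ht|].
  rewrite comp_comm. exact (le_trans _ _ _ hwd hzt).
Qed.

Lemma fits_exists_le (p q : point) : valid p -> valid q -> p <> q ->
  point_size q <= point_size p -> exists t, in_trio t /\ fits p q t.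
Proof.
  intros hp hq hne hs. destruct p as [|u v x y].
  { destruct q; simpl in hs; [contradiction|lia]. }
  pose proof hp as (hu & hv & _).
  destruct (common_trio_partner_opt (edge_label u q) (edge_label v q)) as [t [ht [tu tv]]].
  { intro z. exact (edge_label_diversity _ _ z hu hq). }
  { intro z. exact (edge_label_diversity _ _ z hv hq). }
  exists t. split; [exact ht|].
  intros r z1 z2 hr h1 h2.
  assert (hru : r = u \/ r = v).
  { assert (hrp : parent_of r (spawn u v x y)).
    { destruct hr as [hr|hr]; [exact hr|].
      apply (edge_label_parent_of_le _ _ z1 h1). apply parent_of_size in hr. lia. }
    destruct hrp as (u' & v' & x' & y' & [= <- <- <- <-] & hr'). exact hr'. }
  assert (hvr : valid r) by (destruct hru as [-> | ->]; assumption).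
  apply partner_le_comp; [| now apply trio_atom | exact (edge_label_diversity _ _ _ hp hvr h1)].
  destruct hru as [-> | ->]; [now apply tu | now apply tv].
Qed.

Lemma trio_label_fits (p q : point) : valid p -> valid q -> p <> q ->
  in_trio (trio_label p q) /\ fits p q (trio_label p q).
Proof.
  intros hp hq hne.
  assert (ht : exists t, in_trio t /\ fits p q t).
  { destruct (Nat.le_gt_cases (point_size q) (point_size p)).
    - now apply fits_exists_le.
    - destruct (fits_exists_le q p) as [t [ht hfit]]; auto; [lia|].
      exists t. split; [exact ht|]. now apply fits_sym. }
  unfold trio_label, in_trio.
  destruct (dec (fits p q a)); [now split; [left|]|].
  destruct (dec (fits p q b)); [now split; [right; left|]|].
  destruct ht as [t [[-> | [-> | ->]] hfit]]; [contradiction|contradiction|].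
  now split; [right; right|].
Qed.

Lemma label_diversity (p q : point) : valid p -> valid q -> p <> q -> diversity_atom (label p q).
Proof.
  intros hp hq hne. unfold label. destruct (dec (p = q)); [contradiction|].
  destruct (edge_label p q) eqn:e.
  - exact (edge_label_diversity _ _ _ hp hq e).
  - apply trio_diversity. now apply trio_label_fits.
Qed.

Lemma label_atom (p q : point) : valid p -> valid q -> is_atom (label p q).
Proof.
  intros hp hq. destruct (classic (p = q)) as [<-|hne].
  - rewrite label_refl. exact integral.
  - exact (proj1 (label_diversity p q hp hq hne)).
Qed.

Lemma label_trio (p q : point) : valid p -> valid q -> p <> q -> edge_label p q = None ->
  in_trio (label p q).
Proof. intros. rewrite label_no_edge by assumption. now apply trio_label_fits. Qed.

Lemma label_triangle_parents (p q r : point) : valid p -> parent_of q p -> parent_of r p -> q <> r ->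
  label q r ⊑ label p q ⊙ label p r.
Proof.
  intros hp (u & v & x & y & -> & hq) (u' & v' & x' & y' & [= <- <- <- <-] & hr) hqr.
  destruct hp as (_ & _ & _ & _ & huv).
  destruct hq as [-> | ->], hr as [-> | ->]; try (exfalso; now apply hqr).
  - now rewrite label_spawn_l, label_spawn_r by congruence.
  - rewrite label_spawn_l, label_spawn_r, label_sym, comp_comm by congruence. exact huv.
Qed.

Lemma label_triangle_non_edge (p q r : point) : valid p -> valid q -> valid r ->
  p <> q -> p <> r -> r <> q -> edge_label p q = None ->
  (exists z, edge_label p r = Some z) -> (exists z, edge_label r q = Some z) ->
  label p q ⊑ label p r ⊙ label r q.
Proof.
  intros hp hq hr hpq hpr hrq hnone [z1 h1] [z2 h2].
  destruct (classic (parent_of r p \/ parent_of r q)) as [hpar|hpar].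
  - rewrite (label_edge p r z1), (label_edge r q z2), label_no_edge by assumption.
    exact (proj2 (trio_label_fits p q hp hq hpq) r z1 z2 hpar h1 h2).
  - assert (hpr' : parent_of p r) by (destruct (edge_label_parent _ _ _ h1); tauto).
    assert (hqr' : parent_of q r) by (destruct (edge_label_parent _ _ _ h2); tauto).
    rewrite (label_sym p r). exact (label_triangle_parents r p q hr hpr' hqr' hpq).
Qed.

Lemma label_triangle_rotl (p q r : point) : valid p -> valid q -> valid r ->
  label p r ⊑ label p q ⊙ label r q -> label p q ⊑ label p r ⊙ label r q.
Proof. intros hp hq hr h. now apply atom_cycle; [apply label_atom .. |]. Qed.

Lemma label_triangle_rotr (p q r : point) : valid p -> valid q -> valid r ->
  label r q ⊑ label p q ⊙ label p r -> label p q ⊑ label p r ⊙ label r q.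
Proof. intros hp hq hr h. rewrite comp_comm. now apply atom_cycle; [apply label_atom .. |]. Qed.

Lemma label_triangle_edges (p q r : point) (z1 z2 z3 : A) : valid p -> valid q -> valid r ->
  p <> q -> p <> r -> q <> r ->
  edge_label p q = Some z1 -> edge_label p r = Some z2 -> edge_label r q = Some z3 ->
  label p q ⊑ label p r ⊙ label r q.
Proof.
  intros hp hq hr hpq hpr hqr e1 e2 e3.
  (* the largest of the three points has the other two as parents *)
  assert (hmax : (point_size q <= point_size p /\ point_size r <= point_size p) \/
                 (point_size p <= point_size q /\ point_size r <= point_size q) \/
                 (point_size p <= point_size r /\ point_size q <= point_size r)) by lia.
  destruct hmax as [[s1 s2]|[[s1 s2]|[s1 s2]]].
  - apply label_triangle_rotr; [assumption .. |]. rewrite (label_sym r q).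
    exact (label_triangle_parents p q r hp (edge_label_parent_of_le p q z1 e1 s1)
             (edge_label_parent_of_le p r z2 e2 s2) hqr).
  - apply label_triangle_rotl; [assumption .. |]. rewrite (label_sym p q), (label_sym r q).
    apply (label_triangle_parents q p r hq); [| |exact hpr].
    + apply (edge_label_parent_of_le q p z1); [now rewrite edge_label_sym|exact s1].
    + apply (edge_label_parent_of_le q r z3); [now rewrite edge_label_sym|exact s2].
  - rewrite (label_sym p r).
    apply (label_triangle_parents r p q hr); [|exact (edge_label_parent_of_le r q z3 e3 s2)|exact hpq].
    apply (edge_label_parent_of_le r p z2); [now rewrite edge_label_sym|exact s1].
Qed.

Lemma label_triangle_distinct (p q r : point) : valid p -> valid q -> valid r ->
  p <> q -> p <> r -> q <> r -> label p q ⊑ label p r ⊙ label r q.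
Proof.
  intros hp hq hr hpq hpr hqr.
  assert (hrq : r <> q) by congruence.
  assert (trio_pq : edge_label p q = None -> in_trio (label p q)) by now apply label_trio.
  assert (trio_pr : edge_label p r = None -> in_trio (label p r)) by now apply label_trio.
  assert (trio_rq : edge_label r q = None -> in_trio (label r q)) by now apply label_trio.
  pose proof (label_diversity p q hp hq hpq) as dpq.
  pose proof (label_diversity p r hp hr hpr) as dpr.
  pose proof (label_diversity r q hr hq hrq) as drq.
  destruct (edge_label p q) as [z1|] eqn:e1, (edge_label p r) as [z2|] eqn:e2,
    (edge_label r q) as [z3|] eqn:e3.
  - exact (label_triangle_edges p q r z1 z2 z3 hp hq hr hpq hpr hqr e1 e2 e3).
  - apply label_triangle_rotr; [assumption .. |]. rewrite comp_comm, (label_sym p r).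
    apply label_triangle_non_edge; auto; [exists z2; now rewrite edge_label_sym|now exists z1].
  - apply label_triangle_rotl; [assumption .. |]. rewrite (label_sym r q).
    apply label_triangle_non_edge; auto; [now exists z1|exists z3; now rewrite edge_label_sym].
  - now apply diversity_le_comp_trio; [|apply trio_pr|apply trio_rq].
  - apply label_triangle_non_edge; auto; [now exists z2|now exists z3].
  - apply label_triangle_rotl; [assumption .. |].
    now apply diversity_le_comp_trio; [|apply trio_pq|apply trio_rq].
  - apply label_triangle_rotr; [assumption .. |].
    now apply diversity_le_comp_trio; [|apply trio_pq|apply trio_pr].
  - now apply diversity_le_comp_trio; [|apply trio_pr|apply trio_rq].
Qed.

Lemma label_triangle (p q r : point) : valid p -> valid q -> valid r ->
  label p q ⊑ label p r ⊙ label r q.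
Proof.
  apply (triangle_of_distinct valid label).
  - intros. apply label_sym.
  - intros. apply label_refl.
  - intros. now apply label_atom.
  - intros. now apply label_triangle_distinct.
Qed.

Lemma label_witness (p q : point) (x y : A) : valid p -> valid q -> is_atom x -> is_atom y ->
  label p q ⊑ x ⊙ y -> exists w, valid w /\ label p w = x /\ label w q = y.
Proof.
  intros hp hq hx hy hle.
  destruct (atom_id_or_diversity x hx) as [->|dx].
  { rewrite comp_id_l in hle. exists p. rewrite label_refl.
    split; [exact hp|split; [reflexivity|]]. apply atom_le_atom; auto. now apply label_atom. }
  destruct (atom_id_or_diversity y hy) as [->|dy].
  { rewrite comp_id_r in hle. exists q. rewrite label_refl.
    split; [exact hq|split; [|reflexivity]]. apply atom_le_atom; auto. now apply label_atom. }
  exists (spawn p q x y). split; [simpl; tauto|split].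
  - rewrite label_sym. apply label_spawn_l.
  - destruct (classic (q = p)) as [->|hqp]; [|now apply label_spawn_r].
    rewrite label_refl in hle. rewrite <- (id_le_comp_eq x y hx hy hle). apply label_spawn_l.
Qed.

Lemma atom_realized (x : A) : is_atom x -> exists p q, valid p /\ valid q /\ label p q = x.
Proof.
  intro hx.
  assert (hle : label origin origin ⊑ x ⊙ x).
  { rewrite label_refl. apply id_le_comp_self, hx. }
  destruct (label_witness origin origin x x I I hx hx hle) as [w [hw [e _]]].
  now exists origin, w.
Qed.

Theorem representable_of_flexible_trio : representable (A := A).
Proof.
  exists {p : point | valid p}, (fun _ _ => True),
    (fun z (p q : {p : point | valid p}) => label (proj1_sig p) (proj1_sig q) ⊑ z).
  split; [auto|split; [auto|split; [auto|split; [auto|]]]].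
  split; [|split; [|split; [|split; [|split]]]].
  - intros x y hxy. apply NNPP. intro hne.
    destruct (atom_separates x y hne) as [s [hs hsep]].
    destruct (atom_realized s hs) as [p [q [hp [hq e]]]].
    specialize (hxy (exist _ p hp) (exist _ q hq)). simpl in hxy. rewrite e in hxy. tauto.
  - intros x y [p hp] [q hq]. simpl. split.
    + apply atom_le_join. now apply label_atom.
    + intros [h|h]; eapply le_trans; [exact h|apply le_join_l|exact h|apply le_join_r].
  - intros x [p hp] [q hq]. simpl. split.
    + intro h. split; [exact I|]. apply atom_not_le; [now apply label_atom|exact h].
    + intros [_ h]. apply atom_le_compl; [now apply label_atom|exact h].
  - intros x y [p hp] [q hq]. simpl. split.
    + intro h.
      destruct (atom_le_comp_atoms _ _ _ (label_atom p q hp hq) h)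
        as [x' [y' [hx' [hy' [hxx' [hyy' hle]]]]]].
      destruct (label_witness p q x' y' hp hq hx' hy' hle) as [w [hw [e1 e2]]].
      exists (exist _ w hw). simpl. now rewrite e1, e2.
    + intros [[w hw] [h1 h2]]. simpl in h1, h2.
      apply le_trans with (label p w ⊙ label w q); [now apply label_triangle|].
      now apply comp_mono.
  - intros x [p hp] [q hq]. simpl. now rewrite symmetric, label_sym.
  - intros [p hp] [q hq]. simpl. split.
    + intro h. destruct (classic (p = q)) as [<-|hne].
      * f_equal. apply proof_irrelevance.
      * exfalso. exact (diversity_not_le_id _ (label_diversity p q hp hq hne) h).
    + intros [= <-]. rewrite label_refl. apply le_refl.
Qed.

End FlexibleTrio.
End SymmetricIntegralRA.

Theorem theorem4 (A : RAsig) :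
  is_RA (A := A) -> is_atomic (A := A) -> is_symmetric (A := A) ->
  is_integral (A := A) ->
  (exists a b c : A, flexible_trio a b c) ->
  one_point_extension (A := A) /\ representable (A := A).
Proof.
  intros (join_comm & join_assoc & huntington & _ & comp_join_distr & comp_id_r & _ & _ &
          conv_comp & cycle_law) atomic symmetric integral [a [b [c flexible]]].
  split; [eapply one_point_extension_of_flexible_trio | eapply representable_of_flexible_trio];
    eassumption.
Qed.
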